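(* Let $n\ge 0$ be an integer and $r>0$. Then the function $F(\eta)=\eta^{2}\frac{I_{n+1/2}'(\eta^{-1}r)}{I_{n+1/2}(\eta^{-1}r)}$ is strictly monotonically increasing in $\eta\in(0,\infty)$.
   Context: $I_{n+1/2}$ denotes the modified Bessel function of the first kind of order $n+\tfrac12$. *)

From Stdlib Require Import Reals Factorial.
From Coquelicot Require Import Coquelicot.
Open Scope R_scope.

(* Gamma function at half-integers: Gamma(m + 1/2) = (2m)! sqrt(pi) / (4^m m!). *)
Definition gamma_half (m : nat) : R :=
  INR (Factorial.fact (2 * m)) * sqrt PI / (4 ^ m * INR (Factorial.fact m)).

(* Modified Bessel function of the first kind of order n + 1/2, for x > 0:
   I_{n+1/2}(x) = sum_{k>=0} (x/2)^{2k+n+1/2} / (k! Gamma(k + n + 3/2)). *)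
Definition besselI_half (n : nat) (x : R) : R :=
  Series (fun k : nat =>
    Rpower (x / 2) (2 * INR k + INR n + / 2)
    / (INR (Factorial.fact k) * gamma_half (k + n + 1))).

From Stdlib Require Import Reals Lra Lia.
From Coquelicot Require Import Coquelicot.
Open Scope R_scope.

(* With nu = n + 1/2 and t = (x/2)^2 one has I_nu(x) = (x/2)^nu A(t) for an entire
   power series A with positive coefficients a_k, hence
     eta^2 I_nu'(r/eta) / I_nu(r/eta) = nu eta^3 / r + (r eta / 2) A'(t) / A(t),
   t = (r / (2 eta))^2.  The first term is strictly increasing in eta.  The
   coefficients of A' are a_k / (k + nu + 1), a decreasing multiple of a_k, so A'/A
   is nonincreasing in t (Biernacki-Krzyz); as t decreases with eta, the second
   term is nondecreasing. *)

Lemma PSeries_Un_cv (a : nat -> R) (x : R) :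
  ex_pseries a x -> Un_cv (sum_f_R0 (fun k => a k * x ^ k)) (PSeries a x).
Proof.
  intros Ha. apply is_series_Reals, Series_correct, ex_pseries_R, Ha.
Qed.

Lemma PSeries_pos (a : nat -> R) (x : R) :
  0 <= x -> (forall k, 0 <= a k) -> 0 < a 0%nat -> ex_pseries a x ->
  0 < PSeries a x.
Proof.
  intros Hx Ha Ha0 Hex.
  apply Rlt_le_trans with (sum_f_R0 (fun k => a k * x ^ k) 0); [simpl; lra |].
  apply sum_incr; [now apply PSeries_Un_cv |].
  intros k. apply Rmult_le_pos; [apply Ha | now apply pow_le].
Qed.

Lemma sum_f_R0_lincomb (f g h k : nat -> R) (c1 c2 c3 c4 : R) (N : nat) :
  sum_f_R0 (fun i => f i * c1 + c2 * g i - h i * c3 - c4 * k i) N =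
  sum_f_R0 f N * c1 + c2 * sum_f_R0 g N - sum_f_R0 h N * c3 - c4 * sum_f_R0 k N.
Proof. induction N as [| N IH]; simpl; [ring | rewrite IH; ring]. Qed.

Section RatioOfPowerSeries.

Variables q a : nat -> R.
Hypothesis q_a_ratio_antitone : forall i j, (i <= j)%nat -> q j * a i <= q i * a j.

Lemma sum_f_R0_cross_mul_le (s t : R) (N : nat) : 0 <= s <= t ->
  sum_f_R0 (fun k => q k * t ^ k) N * sum_f_R0 (fun k => a k * s ^ k) N <=
  sum_f_R0 (fun k => q k * s ^ k) N * sum_f_R0 (fun k => a k * t ^ k) N.
Proof.
  intros Hst. induction N as [| N IH]; [simpl; lra |].
  rewrite !tech5.
  set (c1 := a (S N) * t ^ S N). set (c2 := q (S N) * s ^ S N).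
  set (c3 := a (S N) * s ^ S N). set (c4 := q (S N) * t ^ S N).
  (* the cross terms between index S N and each i <= N pair up into nonnegative products *)
  assert (Hcross : 0 <= sum_f_R0 (fun i => (q i * s ^ i) * c1 + c2 * (a i * t ^ i)
                                          - (q i * t ^ i) * c3 - c4 * (a i * s ^ i)) N).
  { apply Rle_trans with (sum_f_R0 (fun _ => 0) N).
    { rewrite sum_cte. lra. }
    apply sum_Rle. intros i Hi.
    replace ((q i * s ^ i) * c1 + c2 * (a i * t ^ i) - (q i * t ^ i) * c3 - c4 * (a i * s ^ i))
      with ((q i * a (S N) - q (S N) * a i) * (s ^ i * t ^ i) * (t ^ (S N - i) - s ^ (S N - i))).
    2:{ unfold c1, c2, c3, c4.
        assert (HN : S N = (i + (S N - i))%nat) by lia.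
        set (m := (S N - i)%nat) in *. rewrite HN, !pow_add. ring. }
    assert (Hq := q_a_ratio_antitone i (S N) ltac:(lia)).
    assert (Hpow := pow_incr s t (S N - i) Hst).
    assert (0 <= s ^ i * t ^ i) by (apply Rmult_le_pos; apply pow_le; lra).
    apply Rmult_le_pos; [apply Rmult_le_pos |]; lra. }
  rewrite sum_f_R0_lincomb in Hcross.
  assert (Hdiag : c2 * c1 - c4 * c3 = 0) by (unfold c1, c2, c3, c4; ring).
  nra.
Qed.

Lemma PSeries_cross_mul_le (s t : R) : 0 <= s <= t ->
  ex_pseries q s -> ex_pseries q t -> ex_pseries a s -> ex_pseries a t ->
  PSeries q t * PSeries a s <= PSeries q s * PSeries a t.
Proof.
  intros Hst Hqs Hqt Has Hat.
  exact (Rle_cv_lim (fun N => sum_f_R0_cross_mul_le s t N Hst)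
           (CV_mult _ _ _ _ (PSeries_Un_cv _ _ Hqt) (PSeries_Un_cv _ _ Has))
           (CV_mult _ _ _ _ (PSeries_Un_cv _ _ Hqs) (PSeries_Un_cv _ _ Hat))).
Qed.

Lemma PSeries_ratio_antitone (s t : R) : 0 <= s <= t ->
  (forall k, 0 <= a k) -> 0 < a 0%nat ->
  ex_pseries q s -> ex_pseries q t -> ex_pseries a s -> ex_pseries a t ->
  PSeries q t / PSeries a t <= PSeries q s / PSeries a s.
Proof.
  intros Hst Ha Ha0 Hqs Hqt Has Hat.
  assert (Hs : 0 < PSeries a s) by (apply PSeries_pos; auto; lra).
  assert (Ht : 0 < PSeries a t) by (apply PSeries_pos; auto; lra).
  assert (Hcross := PSeries_cross_mul_le s t Hst Hqs Hqt Has Hat).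
  apply (Rmult_le_reg_r (PSeries a t * PSeries a s)); [nra |].
  replace (PSeries q t / PSeries a t * (PSeries a t * PSeries a s))
    with (PSeries q t * PSeries a s) by (field; lra).
  replace (PSeries q s / PSeries a s * (PSeries a t * PSeries a s))
    with (PSeries q s * PSeries a t) by (field; lra).
  exact Hcross.
Qed.

End RatioOfPowerSeries.

Lemma INR_fact_pos (m : nat) : 0 < INR (Factorial.fact m).
Proof. apply lt_0_INR, Factorial.lt_O_fact. Qed.

Lemma gamma_half_pos (m : nat) : 0 < gamma_half m.
Proof.
  unfold gamma_half. apply Rdiv_lt_0_compat.
  - apply Rmult_lt_0_compat; [apply INR_fact_pos | apply sqrt_lt_R0, PI_RGT_0].
  - apply Rmult_lt_0_compat; [apply pow_lt; lra | apply INR_fact_pos].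
Qed.

Lemma gamma_half_S (m : nat) : gamma_half (S m) = (INR m + / 2) * gamma_half m.
Proof.
  unfold gamma_half.
  replace (2 * S m)%nat with (S (S (2 * m))) by lia.
  change (Factorial.fact (S (S (2 * m))))
    with (S (S (2 * m)) * (S (2 * m) * Factorial.fact (2 * m)))%nat.
  change (Factorial.fact (S m)) with (S m * Factorial.fact m)%nat.
  rewrite !mult_INR, !S_INR, mult_INR. simpl pow. simpl (INR 2).
  assert (H1 := INR_fact_pos m). assert (H2 := INR_fact_pos (2 * m)).
  assert (H3 : 0 < 4 ^ m) by (apply pow_lt; lra). assert (H4 := pos_INR m).
  field. lra.
Qed.

Definition besselI_half_coef (n k : nat) : R :=
  / (INR (Factorial.fact k) * gamma_half (k + n + 1)).

Lemma besselI_half_coef_pos (n k : nat) : 0 < besselI_half_coef n k.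
Proof.
  apply Rinv_0_lt_compat, Rmult_lt_0_compat; [apply INR_fact_pos | apply gamma_half_pos].
Qed.

Lemma besselI_half_coef_S (n k : nat) :
  besselI_half_coef n (S k) =
  besselI_half_coef n k / ((INR k + 1) * (INR k + INR n + 3 / 2)).
Proof.
  unfold besselI_half_coef.
  replace (S k + n + 1)%nat with (S (k + n + 1)) by lia.
  rewrite gamma_half_S.
  change (Factorial.fact (S k)) with (S k * Factorial.fact k)%nat.
  rewrite mult_INR, S_INR, !plus_INR. simpl (INR 1).
  assert (H1 := INR_fact_pos k). assert (H2 := gamma_half_pos (k + n + 1)).
  assert (H3 := pos_INR k). assert (H4 := pos_INR n).
  field. repeat split; lra.
Qed.

Lemma PS_derive_besselI_half_coef (n k : nat) :
  PS_derive (besselI_half_coef n) k = besselI_half_coef n k / (INR k + INR n + 3 / 2).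
Proof.
  unfold PS_derive. rewrite besselI_half_coef_S, S_INR.
  assert (H1 := pos_INR k). assert (H2 := pos_INR n).
  field. lra.
Qed.

Lemma PS_derive_besselI_half_coef_pos (n k : nat) :
  0 < PS_derive (besselI_half_coef n) k.
Proof.
  rewrite PS_derive_besselI_half_coef.
  assert (H1 := pos_INR k). assert (H2 := pos_INR n).
  apply Rdiv_lt_0_compat; [apply besselI_half_coef_pos | lra].
Qed.

Lemma CV_radius_besselI_half_coef (n : nat) : CV_radius (besselI_half_coef n) = p_infty.
Proof.
  apply CV_radius_infinite_DAlembert.
  { intros k. apply Rgt_not_eq, besselI_half_coef_pos. }
  apply is_lim_seq_le_le with (u := fun _ => 0) (w := fun k => / INR (S k)).
  - intros k. rewrite besselI_half_coef_S.
    assert (H1 := besselI_half_coef_pos n k).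
    assert (H2 := pos_INR k). assert (H3 := pos_INR n).
    replace (besselI_half_coef n k / ((INR k + 1) * (INR k + INR n + 3 / 2))
             / besselI_half_coef n k)
      with (/ ((INR k + 1) * (INR k + INR n + 3 / 2))) by (field; lra).
    assert (Hpos : 0 < / ((INR k + 1) * (INR k + INR n + 3 / 2)))
      by (apply Rinv_0_lt_compat; nra).
    rewrite Rabs_pos_eq, S_INR by lra.
    split; [lra | apply Rinv_le_contravar; nra].
  - apply is_lim_seq_const.
  - replace (Finite 0) with (Rbar_inv p_infty) by reflexivity.
    apply is_lim_seq_inv; [| discriminate].
    apply (is_lim_seq_incr_1 INR), is_lim_seq_INR.
Qed.

Lemma ex_pseries_besselI_half_coef (n : nat) (x : R) :
  ex_pseries (besselI_half_coef n) x.
Proof. apply CV_radius_inside. now rewrite CV_radius_besselI_half_coef. Qed.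

Lemma ex_pseries_PS_derive_besselI_half_coef (n : nat) (x : R) :
  ex_pseries (PS_derive (besselI_half_coef n)) x.
Proof. apply ex_pseries_derive. now rewrite CV_radius_besselI_half_coef. Qed.

Lemma PSeries_besselI_half_coef_pos (n : nat) (t : R) : 0 <= t ->
  0 < PSeries (besselI_half_coef n) t.
Proof.
  intros Ht. apply PSeries_pos; auto.
  - intros k. apply Rlt_le, besselI_half_coef_pos.
  - apply besselI_half_coef_pos.
  - apply ex_pseries_besselI_half_coef.
Qed.

Lemma besselI_half_PSeries (n : nat) (x : R) : 0 < x ->
  besselI_half n x =
  Rpower (x / 2) (INR n + / 2) * PSeries (besselI_half_coef n) ((x / 2) ^ 2).
Proof.
  intros Hx. unfold besselI_half, PSeries. rewrite <- Series_scal_l.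
  apply Series_ext. intros k.
  replace (2 * INR k + INR n + / 2) with (INR (2 * k) + (INR n + / 2))
    by (rewrite mult_INR; simpl (INR 2); ring).
  rewrite Rpower_plus, Rpower_pow, <- pow_mult by lra.
  unfold besselI_half_coef, Rdiv. ring.
Qed.

Lemma Derive_besselI_half (n : nat) (x : R) : 0 < x ->
  Derive (besselI_half n) x =
  Rpower (x / 2) (INR n + / 2) *
    ((INR n + / 2) / x * PSeries (besselI_half_coef n) ((x / 2) ^ 2)
     + x / 2 * PSeries (PS_derive (besselI_half_coef n)) ((x / 2) ^ 2)).
Proof.
  intros Hx. apply is_derive_unique.
  apply is_derive_ext_loc with
    (f := fun y => Rpower (y / 2) (INR n + / 2) * PSeries (besselI_half_coef n) ((y / 2) ^ 2)).
  { apply (filter_imp (fun y => 0 < y)); [| exact (open_gt 0 x Hx)].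
    intros y Hy. now rewrite besselI_half_PSeries. }
  assert (Hpow : is_derive (fun y => Rpower (y / 2) (INR n + / 2)) x
                   ((INR n + / 2) / x * Rpower (x / 2) (INR n + / 2))).
  { unfold Rpower. auto_derive; [lra | unfold Rdiv; field; lra]. }
  assert (Hser : is_derive (fun y => PSeries (besselI_half_coef n) ((y / 2) ^ 2)) x
                   (x / 2 * PSeries (PS_derive (besselI_half_coef n)) ((x / 2) ^ 2))).
  { apply (is_derive_comp (PSeries (besselI_half_coef n)) (fun y => (y / 2) ^ 2)).
    - apply is_derive_PSeries. now rewrite CV_radius_besselI_half_coef.
    - auto_derive; [easy | field]. }
  assert (Hprod := is_derive_mult _ _ _ _ _ Hpow Hser Rmult_comm).
  unfold mult, plus in Hprod; simpl in Hprod.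
  match goal with |- is_derive _ _ ?l => replace l with
    ((INR n + / 2) / x * Rpower (x / 2) (INR n + / 2) * PSeries (besselI_half_coef n) ((x / 2) ^ 2)
     + Rpower (x / 2) (INR n + / 2)
       * (x / 2 * PSeries (PS_derive (besselI_half_coef n)) ((x / 2) ^ 2))) by ring end.
  exact Hprod.
Qed.

(* A'(t) / A(t) for the series A(t) of the header, so that x I_nu'(x) / I_nu(x)
   = nu + 2 t A'(t) / A(t) at t = (x/2)^2. *)
Definition besselI_half_ratio (n : nat) (t : R) : R :=
  PSeries (PS_derive (besselI_half_coef n)) t / PSeries (besselI_half_coef n) t.

Lemma besselI_half_ratio_pos (n : nat) (t : R) : 0 <= t -> 0 < besselI_half_ratio n t.
Proof.
  intros Ht. apply Rdiv_lt_0_compat; [| now apply PSeries_besselI_half_coef_pos].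
  apply PSeries_pos; auto.
  - intros k. apply Rlt_le, PS_derive_besselI_half_coef_pos.
  - apply PS_derive_besselI_half_coef_pos.
  - apply ex_pseries_PS_derive_besselI_half_coef.
Qed.

Lemma besselI_half_ratio_antitone (n : nat) (s t : R) : 0 <= s <= t ->
  besselI_half_ratio n t <= besselI_half_ratio n s.
Proof.
  intros Hst. apply PSeries_ratio_antitone; auto.
  - intros i j Hij. rewrite !PS_derive_besselI_half_coef.
    assert (Hi := besselI_half_coef_pos n i). assert (Hj := besselI_half_coef_pos n j).
    assert (Hle := le_INR _ _ Hij). assert (H1 := pos_INR i). assert (H2 := pos_INR n).
    assert (Hinv : / (INR j + INR n + 3 / 2) <= / (INR i + INR n + 3 / 2))
      by (apply Rinv_le_contravar; lra).
    assert (0 < besselI_half_coef n i * besselI_half_coef n j) by nra.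
    unfold Rdiv. nra.
  - intros k. apply Rlt_le, besselI_half_coef_pos.
  - apply besselI_half_coef_pos.
  - apply ex_pseries_PS_derive_besselI_half_coef.
  - apply ex_pseries_PS_derive_besselI_half_coef.
  - apply ex_pseries_besselI_half_coef.
  - apply ex_pseries_besselI_half_coef.
Qed.

Lemma scaled_log_derivative_besselI_half (n : nat) (r eta : R) : 0 < r -> 0 < eta ->
  eta ^ 2 * (Derive (besselI_half n) (r / eta) / besselI_half n (r / eta)) =
  (INR n + / 2) * eta ^ 3 / r + r * eta / 2 * besselI_half_ratio n ((r / eta / 2) ^ 2).
Proof.
  intros Hr Heta.
  assert (Hx : 0 < r / eta) by (apply Rdiv_lt_0_compat; auto).
  rewrite Derive_besselI_half, besselI_half_PSeries by exact Hx.
  unfold besselI_half_ratio.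
  assert (Hpow : 0 < Rpower (r / eta / 2) (INR n + / 2)) by apply exp_pos.
  assert (Hser := PSeries_besselI_half_coef_pos n ((r / eta / 2) ^ 2) (pow2_ge_0 _)).
  field. repeat split; lra.
Qed.

Theorem corollary2p2 (n : nat) (r : R) (hr : 0 < r) :
  forall eta1 eta2 : R, 0 < eta1 -> eta1 < eta2 ->
    eta1 ^ 2 * (Derive (besselI_half n) (r / eta1) / besselI_half n (r / eta1))
    < eta2 ^ 2 * (Derive (besselI_half n) (r / eta2) / besselI_half n (r / eta2)).
Proof.
  intros eta1 eta2 H1 H12.
  rewrite !scaled_log_derivative_besselI_half by lra.
  assert (Ht : 0 <= (r / eta2 / 2) ^ 2 <= (r / eta1 / 2) ^ 2).
  { split; [apply pow2_ge_0 |].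
    apply pow_incr. unfold Rdiv.
    assert (/ eta2 <= / eta1) by (apply Rinv_le_contravar; lra).
    assert (0 < / eta2) by (apply Rinv_0_lt_compat; lra).
    split; nra. }
  assert (Hratio := besselI_half_ratio_antitone n _ _ Ht).
  assert (Hratio_pos := besselI_half_ratio_pos n _ (proj1 Ht)).
  assert (Hnu : 0 < INR n + / 2) by (assert (H := pos_INR n); lra).
  assert (Hcube : (INR n + / 2) * eta1 ^ 3 / r < (INR n + / 2) * eta2 ^ 3 / r).
  { unfold Rdiv. apply Rmult_lt_compat_r; [now apply Rinv_0_lt_compat |].
    apply Rmult_lt_compat_l; [lra |].
    assert (eta1 * eta1 < eta2 * eta2) by nra.
    simpl. nra. }
  set (R1 := besselI_half_ratio n ((r / eta1 / 2) ^ 2)) in *.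
  set (R2 := besselI_half_ratio n ((r / eta2 / 2) ^ 2)) in *.
  assert (r * eta1 / 2 * R1 <= r * eta2 / 2 * R2).
  { apply Rle_trans with (r * eta1 / 2 * R2).
    - apply Rmult_le_compat_l; [nra | exact Hratio].
    - apply Rmult_le_compat_r; [lra | nra]. }
  lra.
Qed.
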